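(* Let $\mathcal{G}\mathsf{L}$ be any of $\mathcal{G}\mathsf{N4}$, $\mathcal{G}\mathsf{CN4K}$, $\mathcal{G}\mathsf{CN4K}^\pm$, $\mathcal{G}\mathsf{CN4K}^\curlyvee$, $\mathcal{G}\mathsf{CN4K}^{\Join}$, $\mathcal{G}\mathsf{CN4K}^1$. The cut rule (from $\Gamma\Rightarrow\phi$ and $\phi,\Delta\Rightarrow\chi$ infer $\Gamma,\Delta\Rightarrow\chi$) is admissible in $\mathcal{G}\mathsf{L}$: if both premises are provable in $\mathcal{G}\mathsf{L}$, so is the conclusion.
   Context: Fix a countable set $\mathsf{Prop}$ of propositional variables. The language $\mathcal{L}$ is given by the grammar $\phi::=p\mid{\sim}\phi\mid(\phi\wedge\phi)\mid(\phi\vee\phi)\mid(\phi\to\phi)\mid\Box\phi\mid\Diamond\phi$ with $p\in\mathsf{Prop}$ (for $\mathcal{G}\mathsf{N4}$ only modality-free formulas are used). A sequent is $\Gamma\Rightarrow\phi$ with $\Gamma$ a finite multiset of formulas and $\phi$ a single formula. $\Gamma^\Box=\{\phi\mid\Box\phi\in\Gamma\}$, $\Gamma^\Diamond_\sim=\{{\sim}\phi\mid{\sim}\Diamond\phi\in\Gamma\}$ (multisets). Rules are written premise(s) / conclusion. Rules of $\mathcal{G}\mathsf{N4}$: axioms $p,\Gamma\Rightarrow p$ and ${\sim}p,\Gamma\Rightarrow{\sim}p$ ($p\in\mathsf{Prop}$); ${\sim}{\sim}_l$: $\phi,\Gamma\Rightarrow\psi$ / ${\sim}{\sim}\phi,\Gamma\Rightarrow\psi$;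 ${\sim}{\sim}_r$: $\Gamma\Rightarrow\phi$ / $\Gamma\Rightarrow{\sim}{\sim}\phi$; $\wedge_l$: $\phi,\chi,\Gamma\Rightarrow\psi$ / $\phi\wedge\chi,\Gamma\Rightarrow\psi$; $\wedge_r$: $\Gamma\Rightarrow\phi$ and $\Gamma\Rightarrow\chi$ / $\Gamma\Rightarrow\phi\wedge\chi$; $\vee_l$: $\phi,\Gamma\Rightarrow\psi$ and $\chi,\Gamma\Rightarrow\psi$ / $\phi\vee\chi,\Gamma\Rightarrow\psi$; $\vee_{r_1}$: $\Gamma\Rightarrow\phi$ / $\Gamma\Rightarrow\phi\vee\chi$; $\vee_{r_2}$: $\Gamma\Rightarrow\chi$ / $\Gamma\Rightarrow\phi\vee\chi$; ${\sim}\vee_l$: ${\sim}\phi,{\sim}\chi,\Gamma\Rightarrow\psi$ / ${\sim}(\phi\vee\chi),\Gamma\Rightarrow\psi$; ${\sim}\vee_r$: $\Gamma\Rightarrow{\sim}\phi$ and $\Gamma\Rightarrow{\sim}\chi$ / $\Gamma\Rightarrow{\sim}(\phi\vee\chi)$; ${\sim}\wedge_l$: ${\sim}\phi,\Gamma\Rightarrow\psi$ and ${\sim}\chi,\Gamma\Rightarrow\psi$ / ${\sim}(\phi\wedge\chi),\Gamma\Rightarrow\psi$; ${\sim}\wedge_{r_1}$: $\Gamma\Rightarrow{\sim}\phi$ / $\Gamma\Rightarrow{\sim}(\phi\wedge\chi)$; ${\sim}\wedge_{r_2}$: $\Gamma\Rightarrow{\sim}\chi$ / $\Gamma\Rightarrow{\sim}(\phi\wedge\chi)$;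 $\to_l$: $\phi\to\chi,\Gamma\Rightarrow\phi$ and $\chi,\Gamma\Rightarrow\psi$ / $\phi\to\chi,\Gamma\Rightarrow\psi$; $\to_r$: $\Gamma,\phi\Rightarrow\chi$ / $\Gamma\Rightarrow\phi\to\chi$; ${\sim}\!\to_l$: $\phi,{\sim}\chi,\Gamma\Rightarrow\psi$ / ${\sim}(\phi\to\chi),\Gamma\Rightarrow\psi$; ${\sim}\!\to_r$: $\Gamma\Rightarrow\phi$ and $\Gamma\Rightarrow{\sim}\chi$ / $\Gamma\Rightarrow{\sim}(\phi\to\chi)$. Modal rules: $\Box$: $\Gamma^\Box\Rightarrow\chi$ / $\Gamma\Rightarrow\Box\chi$; $\Diamond$: $\phi\Rightarrow\chi$ / $\Gamma,\Diamond\phi\Rightarrow\Diamond\chi$; $\Box_\sim$: ${\sim}\phi\Rightarrow{\sim}\chi$ / $\Gamma,{\sim}\Box\phi\Rightarrow{\sim}\Box\chi$; $\Diamond_\sim$: $\Gamma^\Diamond_\sim\Rightarrow{\sim}\chi$ / $\Gamma\Rightarrow{\sim}\Diamond\chi$; $\Diamond^\pm$: $\Gamma^\Box,\phi\Rightarrow\chi$ / $\Gamma,\Diamond\phi\Rightarrow\Diamond\chi$; $\Box^\pm_\sim$: $\Gamma^\Diamond_\sim,{\sim}\phi\Rightarrow{\sim}\chi$ / $\Gamma,{\sim}\Box\phi\Rightarrow{\sim}\Box\chi$; $\Diamond^\curlyvee$: $\Gamma^\Diamond_\sim,\phi\Rightarrow\chi$ / $\Gamma,\Diamond\phi\Rightarrow\Diamond\chi$;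 $\Box^\curlyvee_\sim$: $\Gamma^\Box,{\sim}\phi\Rightarrow{\sim}\chi$ / $\Gamma,{\sim}\Box\phi\Rightarrow{\sim}\Box\chi$; $\Box^{\Join}$: $\Gamma^\Box,\Gamma^\Diamond_\sim\Rightarrow\chi$ / $\Gamma\Rightarrow\Box\chi$; $\Diamond^{\Join}$: ${\sim}\phi\Rightarrow\chi$ / $\Gamma,{\sim}\Box\phi\Rightarrow\Diamond\chi$; $\Box^{\Join}_\sim$: $\phi\Rightarrow{\sim}\chi$ / $\Gamma,\Diamond\phi\Rightarrow{\sim}\Box\chi$; $\Diamond^{\Join}_\sim$: $\Gamma^\Box,\Gamma^\Diamond_\sim\Rightarrow{\sim}\chi$ / $\Gamma\Rightarrow{\sim}\Diamond\chi$; $\Diamond^1$: $\Gamma^\Box,\Gamma^\Diamond_\sim,\phi\Rightarrow\chi$ / $\Gamma,\Diamond\phi\Rightarrow\Diamond\chi$; $\Box^1_\sim$: $\Gamma^\Box,\Gamma^\Diamond_\sim,{\sim}\phi\Rightarrow{\sim}\chi$ / $\Gamma,{\sim}\Box\phi\Rightarrow{\sim}\Box\chi$; $\Diamond^{1,\Join}$: $\Gamma^\Box,\Gamma^\Diamond_\sim,{\sim}\phi\Rightarrow\chi$ / $\Gamma,{\sim}\Box\phi\Rightarrow\Diamond\chi$; $\Box^{1,\Join}_\sim$: $\Gamma^\Box,\Gamma^\Diamond_\sim,\phi\Rightarrow{\sim}\chi$ / $\Gamma,\Diamond\phi\Rightarrow{\sim}\Box\chi$. Calculi: $\mathcal{G}\mathsf{CN4K}=\mathcal{G}\mathsf{N4}+\{\Box,\Diamond,\Box_\sim,\Diamond_\sim\}$;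 $\mathcal{G}\mathsf{CN4K}^\curlyvee=\mathcal{G}\mathsf{N4}+\{\Box,\Diamond^\curlyvee,\Box^\curlyvee_\sim,\Diamond_\sim\}$; $\mathcal{G}\mathsf{CN4K}^\pm=\mathcal{G}\mathsf{N4}+\{\Box,\Diamond^\pm,\Box^\pm_\sim,\Diamond_\sim\}$; $\mathcal{G}\mathsf{CN4K}^{\Join}=\mathcal{G}\mathsf{N4}+\{\Box^{\Join},\Diamond,\Diamond^{\Join},\Box_\sim,\Box^{\Join}_\sim,\Diamond^{\Join}_\sim\}$; $\mathcal{G}\mathsf{CN4K}^1=\mathcal{G}\mathsf{N4}+\{\Box^{\Join},\Diamond^1,\Diamond^{1,\Join},\Box^1_\sim,\Box^{1,\Join}_\sim,\Diamond^{\Join}_\sim\}$. A proof is a finite tree of sequents, each node obtained from its children by a rule, whose leaves are axioms. *)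

From Stdlib Require Import List Permutation.
Import ListNotations.

Definition Prop_var := nat.

Inductive form : Type :=
| Var  : Prop_var -> form
| Neg  : form -> form          (* strong negation ~ *)
| And  : form -> form -> form
| Or   : form -> form -> form
| Imp  : form -> form -> form
| Box  : form -> form
| Dia  : form -> form.

Fixpoint modal_free (f : form) : Prop :=
  match f with
  | Var _ => True
  | Neg a => modal_free a
  | And a b | Or a b | Imp a b => modal_free a /\ modal_free b
  | Box _ | Dia _ => False
  end.

Fixpoint box_part (G : list form) : list form :=
  match G with
  | [] => []
  | Box a :: G' => a :: box_part G'
  | _ :: G' => box_part G'
  end.

Fixpoint negdia_part (G : list form) : list form :=
  match G with
  | [] => []
  | Neg (Dia a) :: G' => Neg a :: negdia_part G'
  | _ :: G' => negdia_part G'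
  end.

Inductive calculus : Type :=
| GN4 | GCN4K | GCN4Kvee | GCN4Kpm | GCN4Kjoin | GCN4K1.

Definition has_Box L := match L with GCN4K | GCN4Kvee | GCN4Kpm => true | _ => false end.
Definition has_Dia L := match L with GCN4K | GCN4Kjoin => true | _ => false end.
Definition has_Box_neg L := match L with GCN4K | GCN4Kjoin => true | _ => false end.
Definition has_Dia_neg L := match L with GCN4K | GCN4Kvee | GCN4Kpm => true | _ => false end.
Definition has_Dia_pm L := match L with GCN4Kpm => true | _ => false end.
Definition has_Box_neg_pm L := match L with GCN4Kpm => true | _ => false end.
Definition has_Dia_vee L := match L with GCN4Kvee => true | _ => false end.
Definition has_Box_neg_vee L := match L with GCN4Kvee => true | _ => false end.
Definition has_Box_join L := match L with GCN4Kjoin | GCN4K1 => true | _ => false end.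
Definition has_Dia_join L := match L with GCN4Kjoin => true | _ => false end.
Definition has_Box_neg_join L := match L with GCN4Kjoin => true | _ => false end.
Definition has_Dia_neg_join L := match L with GCN4Kjoin | GCN4K1 => true | _ => false end.
Definition has_one L := match L with GCN4K1 => true | _ => false end.

(* Sequents Gamma => phi with Gamma a multiset: represented by a list, where
   every rule's conclusion antecedent is taken up to permutation
   (the hypothesis [Permutation D (...)]). *)
Inductive prov (L : calculus) : list form -> form -> Prop :=
| ax_p : forall p G D, Permutation D (Var p :: G) -> prov L D (Var p)
| ax_np : forall p G D, Permutation D (Neg (Var p) :: G) -> prov L D (Neg (Var p))
| nn_l : forall a G D c, Permutation D (Neg (Neg a) :: G) ->
    prov L (a :: G) c -> prov L D c
| nn_r : forall G a, prov L G a -> prov L G (Neg (Neg a))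
| and_l : forall a b G D c, Permutation D (And a b :: G) ->
    prov L (a :: b :: G) c -> prov L D c
| and_r : forall G a b, prov L G a -> prov L G b -> prov L G (And a b)
| or_l : forall a b G D c, Permutation D (Or a b :: G) ->
    prov L (a :: G) c -> prov L (b :: G) c -> prov L D c
| or_r1 : forall G a b, prov L G a -> prov L G (Or a b)
| or_r2 : forall G a b, prov L G b -> prov L G (Or a b)
| nor_l : forall a b G D c, Permutation D (Neg (Or a b) :: G) ->
    prov L (Neg a :: Neg b :: G) c -> prov L D c
| nor_r : forall G a b, prov L G (Neg a) -> prov L G (Neg b) -> prov L G (Neg (Or a b))
| nand_l : forall a b G D c, Permutation D (Neg (And a b) :: G) ->
    prov L (Neg a :: G) c -> prov L (Neg b :: G) c -> prov L D c
| nand_r1 : forall G a b, prov L G (Neg a) -> prov L G (Neg (And a b))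
| nand_r2 : forall G a b, prov L G (Neg b) -> prov L G (Neg (And a b))
| imp_l : forall a b G D c, Permutation D (Imp a b :: G) ->
    prov L (Imp a b :: G) a -> prov L (b :: G) c -> prov L D c
| imp_r : forall G a b, prov L (G ++ [a]) b -> prov L G (Imp a b)
| nimp_l : forall a b G D c, Permutation D (Neg (Imp a b) :: G) ->
    prov L (a :: Neg b :: G) c -> prov L D c
| nimp_r : forall G a b, prov L G a -> prov L G (Neg b) -> prov L G (Neg (Imp a b))
| r_Box : forall G c, has_Box L = true ->
    prov L (box_part G) c -> prov L G (Box c)
| r_Dia : forall a G D c, has_Dia L = true -> Permutation D (Dia a :: G) ->
    prov L [a] c -> prov L D (Dia c)
| r_Box_neg : forall a G D c, has_Box_neg L = true -> Permutation D (Neg (Box a) :: G) ->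
    prov L [Neg a] (Neg c) -> prov L D (Neg (Box c))
| r_Dia_neg : forall G c, has_Dia_neg L = true ->
    prov L (negdia_part G) (Neg c) -> prov L G (Neg (Dia c))
| r_Dia_pm : forall a G D c, has_Dia_pm L = true -> Permutation D (Dia a :: G) ->
    prov L (box_part G ++ [a]) c -> prov L D (Dia c)
| r_Box_neg_pm : forall a G D c, has_Box_neg_pm L = true -> Permutation D (Neg (Box a) :: G) ->
    prov L (negdia_part G ++ [Neg a]) (Neg c) -> prov L D (Neg (Box c))
| r_Dia_vee : forall a G D c, has_Dia_vee L = true -> Permutation D (Dia a :: G) ->
    prov L (negdia_part G ++ [a]) c -> prov L D (Dia c)
| r_Box_neg_vee : forall a G D c, has_Box_neg_vee L = true -> Permutation D (Neg (Box a) :: G) ->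
    prov L (box_part G ++ [Neg a]) (Neg c) -> prov L D (Neg (Box c))
| r_Box_join : forall G c, has_Box_join L = true ->
    prov L (box_part G ++ negdia_part G) c -> prov L G (Box c)
| r_Dia_join : forall a G D c, has_Dia_join L = true -> Permutation D (Neg (Box a) :: G) ->
    prov L [Neg a] c -> prov L D (Dia c)
| r_Box_neg_join : forall a G D c, has_Box_neg_join L = true -> Permutation D (Dia a :: G) ->
    prov L [a] (Neg c) -> prov L D (Neg (Box c))
| r_Dia_neg_join : forall G c, has_Dia_neg_join L = true ->
    prov L (box_part G ++ negdia_part G) (Neg c) -> prov L G (Neg (Dia c))
| r_Dia1 : forall a G D c, has_one L = true -> Permutation D (Dia a :: G) ->
    prov L (box_part G ++ negdia_part G ++ [a]) c -> prov L D (Dia c)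
| r_Box_neg1 : forall a G D c, has_one L = true -> Permutation D (Neg (Box a) :: G) ->
    prov L (box_part G ++ negdia_part G ++ [Neg a]) (Neg c) -> prov L D (Neg (Box c))
| r_Dia1_join : forall a G D c, has_one L = true -> Permutation D (Neg (Box a) :: G) ->
    prov L (box_part G ++ negdia_part G ++ [Neg a]) c -> prov L D (Dia c)
| r_Box_neg1_join : forall a G D c, has_one L = true -> Permutation D (Dia a :: G) ->
    prov L (box_part G ++ negdia_part G ++ [a]) (Neg c) -> prov L D (Neg (Box c)).

(* Cut is eliminated by the usual double induction: on the size of the cut
   formula and, for a fixed formula, on the derivation of the left premise and
   then on that of the right premise.

   Two observations keep the case analysis small.  First, all structural
   properties follow from [prov_covered]: an antecedent formula may be traded for
   any formulas from which right rules rebuild it.  This gives weakening,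
   contraction and the invertibility of every left rule except the one for
   implication, so a cut on a formula with an invertible left rule reduces at
   once to cuts on its components; only implications and modal formulas need the
   induction on the right premise.  Second, reading [~Dia a] as a box of [~a] and
   [~Box a] as a diamond of [~a], the modal rules of all six calculi are
   instances of two schemata, [box_rule] and [dia_rule].  A cut on a principal
   diamond composes two instances of [dia_rule] into a third ([dia_rule_comp]),
   and a cut on a box is absorbed by the modal context of the right premise,
   because in each calculus the context used to introduce a box is contained in
   every context that can see it ([box_rule_compat]). *)

From Stdlib Require Import List Permutation Lia Wf_nat.
Import ListNotations.
Set Implicit Arguments.
Unset Strict Implicit.

Lemma in_box_part x G : In x (box_part G) <-> In (Box x) G.
Proof.
  induction G as [|y G IH]; [reflexivity|].
  destruct y; cbn; rewrite ?IH; intuition congruence.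
Qed.

Lemma in_negdia_part x G :
  In x (negdia_part G) <-> exists a, x = Neg a /\ In (Neg (Dia a)) G.
Proof.
  induction G as [|y G IH]; cbn; [firstorder|].
  destruct y as [| [] | | | | |]; cbn; rewrite ?IH; split;
    try (intros [a [-> [Ha|Ha]]]; [try discriminate; left; congruence|eauto]);
    intros H; try destruct H as [<-|H]; eauto; destruct H as [a [-> Ha]]; eauto.
Qed.

Lemma box_part_app G G' : box_part (G ++ G') = box_part G ++ box_part G'.
Proof. induction G as [|x G IH]; [reflexivity|]. destruct x; cbn; congruence. Qed.

Lemma negdia_part_app G G' : negdia_part (G ++ G') = negdia_part G ++ negdia_part G'.
Proof.
  induction G as [|x G IH]; [reflexivity|].
  destruct x as [| [] | | | | |]; cbn; congruence.
Qed.

Lemma in_split_perm {A} (x : A) G : In x G -> exists R, Permutation G (x :: R).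
Proof.
  intros Hx. destruct (in_split _ _ Hx) as [l1 [l2 ->]].
  exists (l1 ++ l2). symmetry. apply Permutation_middle.
Qed.

Lemma perm_cons_head {A} (P : A) G D : Permutation D (P :: G) -> In P D.
Proof. intros Hp. apply (Permutation_in _ (Permutation_sym Hp)), in_eq. Qed.

Lemma perm_cons_tail {A} (P : A) G D : Permutation D (P :: G) -> incl G D.
Proof. intros Hp x Hx. apply (Permutation_in _ (Permutation_sym Hp)), in_cons, Hx. Qed.

Lemma perm_cons_head_app {A} (P : A) G G0 Dl : Permutation G (P :: G0) -> In P (G ++ Dl).
Proof. intros Hp. apply in_or_app; left; exact (perm_cons_head Hp). Qed.

Ltac incl_tac :=
  let x := fresh "x" in
  intros x;
  repeat match goal with H : incl _ _ |- _ => specialize (H x); revert H end;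
  rewrite ?in_app_iff; cbn [In]; rewrite ?in_app_iff; cbn [In];
  intuition (subst; auto using in_or_app, in_eq, in_cons).

Definition signed (s : bool) (a : form) : form := if s then Neg a else a.
Definition box_form (s : bool) (a : form) : form := if s then Neg (Dia a) else Box a.
Definition dia_form (s : bool) (a : form) : form := if s then Neg (Box a) else Dia a.

Inductive ctx_op := ctx_none | ctx_box | ctx_negdia | ctx_both.

Definition mctx (o : ctx_op) (G X : list form) : list form :=
  match o with
  | ctx_none => X
  | ctx_box => box_part G ++ X
  | ctx_negdia => negdia_part G ++ X
  | ctx_both => box_part G ++ negdia_part G ++ X
  end.

Lemma in_mctx o G X x : In x (mctx o G X) <-> In x (mctx o G []) \/ In x X.
Proof. destruct o; cbn; rewrite ?app_nil_r, ?in_app_iff; tauto. Qed.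

Lemma mctx_incl o G G' X X' :
  (forall a, In (Box a) G -> In (Box a) G') ->
  (forall a, In (Neg (Dia a)) G -> In (Neg (Dia a)) G') ->
  incl X X' -> incl (mctx o G X) (mctx o G' X').
Proof.
  intros Hbox Hnd HX.
  assert (incl (box_part G) (box_part G')) as HB
    by (intros x; rewrite !in_box_part; auto).
  assert (incl (negdia_part G) (negdia_part G')) as HN
    by (intros x; rewrite !in_negdia_part; intros [a [-> Ha]]; eauto).
  destruct o; cbn; repeat apply incl_app_app; assumption.
Qed.

Lemma mctx_mono o G G' X X' : incl G G' -> incl X X' -> incl (mctx o G X) (mctx o G' X').
Proof. intros HG. apply mctx_incl; intros a; apply HG. Qed.

Lemma mctx_dia_form o s a G X : mctx o (dia_form s a :: G) X = mctx o G X.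
Proof. destruct o, s; reflexivity. Qed.

Lemma mctx_app o G G' X : incl (mctx o (G ++ G') X) (mctx o G [] ++ mctx o G' X).
Proof.
  destruct o; cbn; rewrite ?box_part_app, ?negdia_part_app;
    intros x; rewrite ?in_app_iff; tauto.
Qed.

Lemma mctx_single o x :
  mctx o [x] [] = [] \/
  exists s c, x = box_form s c /\ In (signed s c) (mctx o [x] []) /\
              incl (mctx o [x] []) [signed s c].
Proof.
  destruct o; [left; reflexivity|..];
    destruct x as [| [] | | | | |]; cbn; try (left; reflexivity); right;
    [exists false | exists true | exists true | exists false]; eexists;
    (split; [reflexivity | split; [left | intros y [<-|[]]; left]; reflexivity]).
Qed.

(* [box_rule L s o]: L has the rule  mctx o G [] => signed s c / G => box_form s c.
   [dia_rule L s t o]: L has the rule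
   mctx o G [signed s a] => signed t c / G, dia_form s a => dia_form t c. *)
Inductive box_rule (L : calculus) : bool -> ctx_op -> Prop :=
| br_Box : has_Box L = true -> box_rule L false ctx_box
| br_Dia_neg : has_Dia_neg L = true -> box_rule L true ctx_negdia
| br_Box_join : has_Box_join L = true -> box_rule L false ctx_both
| br_Dia_neg_join : has_Dia_neg_join L = true -> box_rule L true ctx_both.

Inductive dia_rule (L : calculus) : bool -> bool -> ctx_op -> Prop :=
| dr_Dia : has_Dia L = true -> dia_rule L false false ctx_none
| dr_Box_neg : has_Box_neg L = true -> dia_rule L true true ctx_none
| dr_Dia_pm : has_Dia_pm L = true -> dia_rule L false false ctx_box
| dr_Box_neg_pm : has_Box_neg_pm L = true -> dia_rule L true true ctx_negdia
| dr_Dia_vee : has_Dia_vee L = true -> dia_rule L false false ctx_negdia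
| dr_Box_neg_vee : has_Box_neg_vee L = true -> dia_rule L true true ctx_box
| dr_Dia_join : has_Dia_join L = true -> dia_rule L true false ctx_none
| dr_Box_neg_join : has_Box_neg_join L = true -> dia_rule L false true ctx_none
| dr_Dia1 : has_one L = true -> dia_rule L false false ctx_both
| dr_Box_neg1 : has_one L = true -> dia_rule L true true ctx_both
| dr_Dia1_join : has_one L = true -> dia_rule L true false ctx_both
| dr_Box_neg1_join : has_one L = true -> dia_rule L false true ctx_both.

Lemma prov_box_rule L s o G c :
  box_rule L s o -> prov L (mctx o G []) (signed s c) -> prov L G (box_form s c).
Proof.
  destruct 1; cbn; rewrite ?app_nil_r;
    [apply r_Box | apply r_Dia_neg | apply r_Box_join | apply r_Dia_neg_join];
    assumption.
Qed.

Lemma prov_dia_rule L s t o a G D c :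
  dia_rule L s t o -> Permutation D (dia_form s a :: G) ->
  prov L (mctx o G [signed s a]) (signed t c) -> prov L D (dia_form t c).
Proof.
  destruct 1; cbn;
    [ eapply r_Dia | eapply r_Box_neg | eapply r_Dia_pm | eapply r_Box_neg_pm
    | eapply r_Dia_vee | eapply r_Box_neg_vee | eapply r_Dia_join
    | eapply r_Box_neg_join | eapply r_Dia1 | eapply r_Box_neg1
    | eapply r_Dia1_join | eapply r_Box_neg1_join ]; eassumption.
Qed.

Inductive covered (G : list form) : form -> Prop :=
| covered_in x : In x G -> covered G x
| covered_nn a : covered G a -> covered G (Neg (Neg a))
| covered_and a b : covered G a -> covered G b -> covered G (And a b)
| covered_or1 a b : covered G a -> covered G (Or a b)
| covered_or2 a b : covered G b -> covered G (Or a b)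
| covered_nor a b : covered G (Neg a) -> covered G (Neg b) -> covered G (Neg (Or a b))
| covered_nand1 a b : covered G (Neg a) -> covered G (Neg (And a b))
| covered_nand2 a b : covered G (Neg b) -> covered G (Neg (And a b))
| covered_imp a b : covered G b -> covered G (Imp a b)
| covered_nimp a b : covered G a -> covered G (Neg b) -> covered G (Neg (Imp a b)).

Definition covers (G' G : list form) : Prop := forall x, In x G -> covered G' x.

Lemma covers_cons G x C : covered G x -> covers G C -> covers G (x :: C).
Proof. intros Hx HC y [<-|Hy]; auto. Qed.

Lemma covers_nil G : covers G [].
Proof. intros x []. Qed.

Lemma covered_trans G G' x : covers G' G -> covered G x -> covered G' x.
Proof. intros HG; induction 1; eauto using covered. Qed.

Definition covered_step (G : list form) (x : form) : Prop :=
  match x with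
  | Neg (Neg a) => covered G a
  | And a b => covered G a /\ covered G b
  | Or a b => covered G a \/ covered G b
  | Neg (Or a b) => covered G (Neg a) /\ covered G (Neg b)
  | Neg (And a b) => covered G (Neg a) \/ covered G (Neg b)
  | Imp _ b => covered G b
  | Neg (Imp a b) => covered G a /\ covered G (Neg b)
  | _ => False
  end.

Lemma covered_inv G x : covered G x -> In x G \/ covered_step G x.
Proof. destruct 1; cbn; auto. Qed.

Lemma covers_incl G G' : incl G G' -> covers G' G.
Proof. intros H x Hx. apply covered_in, H, Hx. Qed.

Lemma covers_mctx o G G' X : covers G' G -> incl (mctx o G X) (mctx o G' X).
Proof.
  intros HG. apply mctx_incl; [| |apply incl_refl];
    intros a Ha; destruct (covered_inv (HG _ Ha)) as [?|[]]; assumption.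
Qed.

Lemma covered_dia_form G s a : covered G (dia_form s a) -> In (dia_form s a) G.
Proof. intros H; destruct (covered_inv H) as [?|Hs]; [assumption|destruct s, Hs]. Qed.

Lemma covers_contract D P R C :
  Permutation D (P :: R) -> covered (C ++ R) P -> covers (C ++ R) (C ++ D).
Proof.
  intros HR HP x Hx. apply in_app_iff in Hx as [Hx|Hx].
  - apply covered_in, in_app_iff; auto.
  - apply (Permutation_in _ HR) in Hx as [<-|Hx]; [assumption|].
    apply covered_in, in_app_iff; auto.
Qed.

Lemma covers_premise_present D P G G' R C :
  Permutation D (P :: G) -> covers G' D -> Permutation G' (P :: R) ->
  covered (C ++ R) P -> covers (C ++ R) (C ++ G).
Proof.
  intros Hp HG HR HP x Hx. apply in_app_iff in Hx as [Hx|Hx].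
  - apply covered_in, in_app_iff; auto.
  - apply (@covered_trans G'); [|apply HG, (perm_cons_tail Hp), Hx].
    intros y Hy. apply (covers_contract HR HP), in_app_iff; auto.
Qed.

Lemma covers_premise_decomposed D P G G' C :
  Permutation D (P :: G) -> covers G' D -> covers G' C -> covers G' (C ++ G).
Proof.
  intros Hp HG HC x Hx. apply in_app_iff in Hx as [Hx|Hx]; auto.
  apply HG, (perm_cons_tail Hp), Hx.
Qed.

Lemma box_rule_covered L s o G G' c :
  box_rule L s o -> covers G' G ->
  (forall T, covers T (mctx o G []) -> prov L T (signed s c)) ->
  prov L G' (box_form s c).
Proof.
  intros Hr HG IH. apply (prov_box_rule Hr), IH, covers_incl, covers_mctx, HG.
Qed.

Lemma dia_rule_covered L s t o a G D G' c :
  dia_rule L s t o -> Permutation D (dia_form s a :: G) -> covers G' D ->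
  (forall T, covers T (mctx o G [signed s a]) -> prov L T (signed t c)) ->
  prov L G' (dia_form t c).
Proof.
  intros Hr Hp HG IH.
  assert (Hin : In (dia_form s a) G')
    by apply covered_dia_form, HG, (perm_cons_head Hp).
  destruct (in_split_perm Hin) as [R HR].
  apply (prov_dia_rule Hr HR), IH, covers_incl.
  rewrite <- (mctx_dia_form o s a R).
  apply incl_tran with (mctx o G' [signed s a]).
  - apply covers_mctx. intros x Hx. apply HG, (perm_cons_tail Hp), Hx.
  - apply mctx_mono, incl_refl. intros x; apply Permutation_in, HR.
Qed.

Ltac principal_cases :=
  match goal with Hp : Permutation _ (?P :: _), HG : covers ?G' _ |- _ =>
    destruct (covered_inv (HG P (perm_cons_head Hp))) as [Hin|Hstep];
    [destruct (in_split_perm Hin) as [R HR] | cbn in Hstep] end.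

Ltac premise_present C :=
  eapply (@covers_premise_present _ _ _ _ _ C); [eassumption | eassumption | eassumption |];
  cbn; eauto 6 using covered, in_eq, in_cons.

Ltac premise_decomposed C :=
  eapply (@covers_premise_decomposed _ _ _ _ C); [eassumption | eassumption |];
  repeat (apply covers_cons; [assumption|]); apply covers_nil.

Lemma prov_covered L G c : prov L G c -> forall G', covers G' G -> prov L G' c.
Proof.
  induction 1 as [p G D Hp | p G D Hp | a G D c Hp H1 IH1 | G a H1 IH1
   | a b G D c Hp H1 IH1 | G a b H1 IH1 H2 IH2 | a b G D c Hp H1 IH1 H2 IH2
   | G a b H1 IH1 | G a b H1 IH1 | a b G D c Hp H1 IH1 | G a b H1 IH1 H2 IH2
   | a b G D c Hp H1 IH1 H2 IH2 | G a b H1 IH1 | G a b H1 IH1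
   | a b G D c Hp H1 IH1 H2 IH2 | G a b H1 IH1 | a b G D c Hp H1 IH1 | G a b H1 IH1 H2 IH2
   | G c Hh H1 IH1 | a G D c Hh Hp H1 IH1 | a G D c Hh Hp H1 IH1 | G c Hh H1 IH1
   | a G D c Hh Hp H1 IH1 | a G D c Hh Hp H1 IH1 | a G D c Hh Hp H1 IH1 | a G D c Hh Hp H1 IH1
   | G c Hh H1 IH1 | a G D c Hh Hp H1 IH1 | a G D c Hh Hp H1 IH1 | G c Hh H1 IH1
   | a G D c Hh Hp H1 IH1 | a G D c Hh Hp H1 IH1 | a G D c Hh Hp H1 IH1 | a G D c Hh Hp H1 IH1];
   intros G' HG.
  - principal_cases; [eapply ax_p; exact HR | destruct Hstep].
  - principal_cases; [eapply ax_np; exact HR | destruct Hstep].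
  - principal_cases.
    + eapply nn_l; [exact HR|]. apply IH1. premise_present [a].
    + apply IH1. premise_decomposed [a].
  - apply nn_r; auto.
  - principal_cases; [|destruct Hstep].
    + eapply and_l; [exact HR|]. apply IH1. premise_present [a; b].
    + apply IH1. premise_decomposed [a; b].
  - apply and_r; auto.
  - principal_cases; [|destruct Hstep].
    + eapply or_l; [exact HR | apply IH1 | apply IH2];
        [premise_present [a] | premise_present [b]].
    + apply IH1. premise_decomposed [a].
    + apply IH2. premise_decomposed [b].
  - apply or_r1; auto.
  - apply or_r2; auto.
  - principal_cases; [|destruct Hstep].
    + eapply nor_l; [exact HR|]. apply IH1. premise_present [Neg a; Neg b].
    + apply IH1. premise_decomposed [Neg a; Neg b].
  - apply nor_r; auto.
  - principal_cases; [|destruct Hstep].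
    + eapply nand_l; [exact HR | apply IH1 | apply IH2];
        [premise_present [Neg a] | premise_present [Neg b]].
    + apply IH1. premise_decomposed [Neg a].
    + apply IH2. premise_decomposed [Neg b].
  - apply nand_r1; auto.
  - apply nand_r2; auto.
  - principal_cases.
    + eapply imp_l; [exact HR | apply IH1 | apply IH2];
        [premise_present [Imp a b] | premise_present [b]].
    + apply IH2. premise_decomposed [b].
  - apply imp_r, IH1. intros x Hx. apply in_app_iff in Hx as [Hx|Hx].
    + apply (covered_trans (G := G')), HG, Hx.
      apply covers_incl, incl_appl, incl_refl.
    + apply covered_in, in_app_iff; auto.
  - principal_cases; [|destruct Hstep].
    + eapply nimp_l; [exact HR|]. apply IH1. premise_present [a; Neg b].
    + apply IH1. premise_decomposed [a; Neg b].
  - apply nimp_r; auto.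
  - apply (box_rule_covered (br_Box Hh) HG).
    cbn. rewrite app_nil_r. exact IH1.
  - exact (dia_rule_covered (dr_Dia Hh) Hp HG IH1).
  - exact (dia_rule_covered (dr_Box_neg Hh) Hp HG IH1).
  - apply (box_rule_covered (br_Dia_neg Hh) HG).
    cbn. rewrite app_nil_r. exact IH1.
  - exact (dia_rule_covered (dr_Dia_pm Hh) Hp HG IH1).
  - exact (dia_rule_covered (dr_Box_neg_pm Hh) Hp HG IH1).
  - exact (dia_rule_covered (dr_Dia_vee Hh) Hp HG IH1).
  - exact (dia_rule_covered (dr_Box_neg_vee Hh) Hp HG IH1).
  - apply (box_rule_covered (br_Box_join Hh) HG).
    cbn. rewrite app_nil_r. exact IH1.
  - exact (dia_rule_covered (dr_Dia_join Hh) Hp HG IH1).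
  - exact (dia_rule_covered (dr_Box_neg_join Hh) Hp HG IH1).
  - apply (box_rule_covered (br_Dia_neg_join Hh) HG).
    cbn. rewrite app_nil_r. exact IH1.
  - exact (dia_rule_covered (dr_Dia1 Hh) Hp HG IH1).
  - exact (dia_rule_covered (dr_Box_neg1 Hh) Hp HG IH1).
  - exact (dia_rule_covered (dr_Dia1_join Hh) Hp HG IH1).
  - exact (dia_rule_covered (dr_Box_neg1_join Hh) Hp HG IH1).
Qed.

Lemma prov_incl L G G' c : prov L G c -> incl G G' -> prov L G' c.
Proof. intros H HG. apply (prov_covered H), covers_incl, HG. Qed.

Ltac contract C :=
  eapply (@covers_contract _ _ _ C);
    [eassumption | cbn; eauto 6 using covered, in_eq, in_cons].

Section RulesByMembership.
Variable L : calculus.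

Lemma ax_p_in p D : In (Var p) D -> prov L D (Var p).
Proof. intros H. destruct (in_split_perm H) as [R HR]. eapply ax_p; exact HR. Qed.

Lemma ax_np_in p D : In (Neg (Var p)) D -> prov L D (Neg (Var p)).
Proof. intros H. destruct (in_split_perm H) as [R HR]. eapply ax_np; exact HR. Qed.

Lemma nn_l_in a D c : In (Neg (Neg a)) D -> prov L (a :: D) c -> prov L D c.
Proof.
  intros H H1. destruct (in_split_perm H) as [R HR].
  eapply nn_l; [exact HR|]. apply (prov_covered H1). contract [a].
Qed.

Lemma and_l_in a b D c : In (And a b) D -> prov L (a :: b :: D) c -> prov L D c.
Proof.
  intros H H1. destruct (in_split_perm H) as [R HR].
  eapply and_l; [exact HR|]. apply (prov_covered H1). contract [a; b].
Qed.

Lemma or_l_in a b D c :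
  In (Or a b) D -> prov L (a :: D) c -> prov L (b :: D) c -> prov L D c.
Proof.
  intros H H1 H2. destruct (in_split_perm H) as [R HR].
  eapply or_l; [exact HR| apply (prov_covered H1) | apply (prov_covered H2)];
    [contract [a] | contract [b]].
Qed.

Lemma nor_l_in a b D c :
  In (Neg (Or a b)) D -> prov L (Neg a :: Neg b :: D) c -> prov L D c.
Proof.
  intros H H1. destruct (in_split_perm H) as [R HR].
  eapply nor_l; [exact HR|]. apply (prov_covered H1). contract [Neg a; Neg b].
Qed.

Lemma nand_l_in a b D c :
  In (Neg (And a b)) D -> prov L (Neg a :: D) c -> prov L (Neg b :: D) c -> prov L D c.
Proof.
  intros H H1 H2. destruct (in_split_perm H) as [R HR].
  eapply nand_l; [exact HR| apply (prov_covered H1) | apply (prov_covered H2)];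
    [contract [Neg a] | contract [Neg b]].
Qed.

Lemma imp_l_in a b D c :
  In (Imp a b) D -> prov L D a -> prov L (b :: D) c -> prov L D c.
Proof.
  intros H H1 H2. destruct (in_split_perm H) as [R HR].
  eapply imp_l; [exact HR| apply (prov_incl H1) | apply (prov_covered H2)].
  - intros x; apply Permutation_in, HR.
  - contract [b].
Qed.

Lemma nimp_l_in a b D c :
  In (Neg (Imp a b)) D -> prov L (a :: Neg b :: D) c -> prov L D c.
Proof.
  intros H H1. destruct (in_split_perm H) as [R HR].
  eapply nimp_l; [exact HR|]. apply (prov_covered H1). contract [a; Neg b].
Qed.

Lemma dia_rule_in s t o a D c :
  dia_rule L s t o -> In (dia_form s a) D ->
  prov L (mctx o D [signed s a]) (signed t c) -> prov L D (dia_form t c).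
Proof.
  intros Hr H H1. destruct (in_split_perm H) as [R HR].
  apply (prov_dia_rule Hr HR), (prov_incl H1).
  rewrite <- (mctx_dia_form o s a R). apply mctx_mono, incl_refl.
  intros x; apply Permutation_in, HR.
Qed.

End RulesByMembership.

Fixpoint fsize (f : form) : nat :=
  match f with
  | Var _ => 1
  | Neg a | Box a | Dia a => S (fsize a)
  | And a b | Or a b | Imp a b => S (fsize a + fsize b)
  end.

Lemma fsize_signed_box s c : fsize (signed s c) < fsize (box_form s c).
Proof. destruct s; cbn; lia. Qed.

Lemma fsize_signed_dia s c : fsize (signed s c) < fsize (dia_form s c).
Proof. destruct s; cbn; lia. Qed.

(* A multicut: the right premise may contain several copies of the cut formula,
   as the left rule for implication, which keeps its principal formula, requires. *)
Definition cut_admissible (L : calculus) (psi : form) : Prop :=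
  forall G D Dl chi, prov L G psi -> prov L D chi -> incl D (psi :: Dl) ->
  prov L (G ++ Dl) chi.

Lemma cut_incl L psi G D T chi :
  cut_admissible L psi -> prov L G psi -> prov L D chi ->
  incl D (psi :: T) -> incl G T -> prov L T chi.
Proof.
  intros Hcut HG HD HDT HGT. apply (prov_incl (Hcut _ _ _ _ HG HD HDT)). incl_tac.
Qed.

Lemma cut_list L G C Dl chi :
  (forall psi, In psi C -> cut_admissible L psi /\ prov L G psi) ->
  prov L (C ++ Dl) chi -> prov L (G ++ Dl) chi.
Proof.
  revert Dl. induction C as [|psi C IH]; intros Dl HC H.
  - apply (prov_incl H), incl_appr, incl_refl.
  - destruct (HC psi (in_eq _ _)) as [Hcut Hpsi].
    assert (H' : prov L (G ++ psi :: Dl) chi).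
    { apply IH; [intros x Hx; apply HC, in_cons, Hx|].
      apply (prov_incl H). incl_tac. }
    apply (cut_incl Hcut Hpsi H'); incl_tac.
Qed.

Lemma prov_replace L D Dl chi phi C :
  prov L D chi -> incl D (phi :: Dl) -> covered C phi -> prov L (C ++ Dl) chi.
Proof.
  intros H HD Hphi. apply (prov_covered H). intros x Hx.
  destruct (HD x Hx) as [<-|Hx'].
  - apply (covered_trans (G := C)); [|exact Hphi].
    apply covers_incl, incl_appl, incl_refl.
  - apply covered_in, in_app_iff; auto.
Qed.

(* The last step of a derivation of [G => phi] by a right rule, for the
   connectives whose left rule is not invertible. *)
Inductive right_intro (L : calculus) (G : list form) : form -> Prop :=
| ri_imp a b : prov L (G ++ [a]) b -> right_intro L G (Imp a b)
| ri_box s o c : box_rule L s o -> prov L (mctx o G []) (signed s c) ->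
    right_intro L G (box_form s c)
| ri_dia s t o a G0 c : dia_rule L s t o -> Permutation G (dia_form s a :: G0) ->
    prov L (mctx o G0 [signed s a]) (signed t c) -> right_intro L G (dia_form t c).

Definition implicative_or_modal (x : form) : Prop :=
  match x with
  | Imp _ _ | Box _ | Dia _ | Neg (Box _) | Neg (Dia _) => True
  | _ => False
  end.

Lemma right_intro_shape L G phi : right_intro L G phi -> implicative_or_modal phi.
Proof. destruct 1 as [| [] | ? [] ]; exact I. Qed.

Lemma right_intro_imp L G a b : right_intro L G (Imp a b) -> prov L (G ++ [a]) b.
Proof.
  intros H. remember (Imp a b) as x eqn:E.
  destruct H as [a' b' Hp | [] o c _ _ | s [] o a' G0 c _ _ _]; try discriminate.
  injection E as -> ->. exact Hp.
Qed.

Lemma right_intro_box L G s c :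
  right_intro L G (box_form s c) ->
  exists o, box_rule L s o /\ prov L (mctx o G []) (signed s c).
Proof.
  intros H. remember (box_form s c) as x eqn:E.
  destruct H as [a b _ | s' o c' Hr Hp | s' t o a G0 c' _ _ _];
    destruct s; try destruct s'; try destruct t; try discriminate;
    injection E as ->; eauto.
Qed.

Lemma right_intro_dia L G t c :
  right_intro L G (dia_form t c) ->
  exists s o a G0, dia_rule L s t o /\ Permutation G (dia_form s a :: G0) /\
                   prov L (mctx o G0 [signed s a]) (signed t c).
Proof.
  intros H. remember (dia_form t c) as x eqn:E.
  destruct H as [a b _ | s o c' _ _ | s t' o a G0 c' Hr Hin Hp];
    destruct t; try destruct s; try destruct t'; try discriminate;
    injection E as ->; eauto 8.
Qed.

Definition uses_ctx (L : calculus) (o : ctx_op) : Prop :=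
  (exists s, box_rule L s o) \/ (exists s t, dia_rule L s t o).

Lemma box_rule_compat L s o' o c :
  box_rule L s o' -> uses_ctx L o -> In (signed s c) (mctx o [box_form s c] []) ->
  forall G X, incl (mctx o' G []) (mctx o G X).
Proof.
  intros Hr [[s1 Ho]|[s1 [t1 Ho]]] Hin G X;
    destruct Hr; destruct Ho; destruct L; try discriminate; cbn in Hin;
    try contradiction; cbn; incl_tac.
Qed.

Lemma dia_rule_comp L s r t o1 o2 :
  dia_rule L s r o1 -> dia_rule L r t o2 -> o1 = o2 /\ dia_rule L s t o1.
Proof.
  destruct 1; inversion 1; subst; destruct L; try discriminate;
    split; try reflexivity; constructor; reflexivity.
Qed.

Section CutReduction.
Variables (L : calculus) (G : list form) (phi : form).
Hypothesis cut_smaller : forall psi, fsize psi < fsize phi -> cut_admissible L psi.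
Hypothesis phi_intro : right_intro L G phi.

Lemma cut_mctx o D Dl X c :
  uses_ctx L o -> incl D (phi :: Dl) -> prov L (mctx o D X) c ->
  prov L (mctx o (G ++ Dl) X) c.
Proof.
  intros Ho HD H.
  assert (HDl : incl (mctx o D X) (mctx o [phi] [] ++ mctx o Dl X)).
  { apply incl_tran with (mctx o (phi :: Dl) X).
    - apply mctx_mono; [exact HD | apply incl_refl].
    - apply (@mctx_app o [phi] Dl X). }
  assert (HG : forall Y, incl (mctx o Y X) (mctx o (G ++ Y) X))
    by (intros Y; apply mctx_mono, incl_refl; apply incl_appr, incl_refl).
  destruct (mctx_single o phi) as [E | [s [c0 [Ephi [Hin Hsub]]]]].
  - rewrite E in HDl. exact (prov_incl H (incl_tran HDl (HG Dl))).
  - rewrite Ephi in phi_intro, cut_smaller, Hin.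
    destruct (right_intro_box phi_intro) as [o' [Hr Hprem]].
    apply (cut_incl (cut_smaller (fsize_signed_box s c0)) Hprem H).
    + intros x Hx. apply HDl, in_app_iff in Hx as [Hx|Hx]; [left|right].
      * destruct (Hsub x Hx) as [<-|[]]; reflexivity.
      * apply HG, Hx.
    + apply incl_tran with (mctx o G X).
      * apply (box_rule_compat Hr Ho Hin).
      * apply mctx_mono, incl_refl. apply incl_appl, incl_refl.
Qed.

Lemma cut_box_rule s o D Dl c :
  box_rule L s o -> incl D (phi :: Dl) -> prov L (mctx o D []) (signed s c) ->
  prov L (G ++ Dl) (box_form s c).
Proof.
  intros Hr HD H. apply (prov_box_rule Hr), (cut_mctx (or_introl (ex_intro _ s Hr)) HD H).
Qed.

Lemma cut_dia_rule s t o a D G0 Dl c :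
  dia_rule L s t o -> Permutation D (dia_form s a :: G0) -> incl D (phi :: Dl) ->
  prov L (mctx o G0 [signed s a]) (signed t c) -> prov L (G ++ Dl) (dia_form t c).
Proof.
  intros Hr Hp HD H.
  assert (H' : prov L (mctx o (G ++ Dl) [signed s a]) (signed t c)).
  { apply (cut_mctx (or_intror (ex_intro _ s (ex_intro _ t Hr))) HD), (prov_incl H).
    apply mctx_mono, incl_refl. apply (perm_cons_tail Hp). }
  destruct (HD _ (perm_cons_head Hp)) as [Ephi|HDl].
  - rewrite Ephi in cut_smaller, phi_intro.
    destruct (right_intro_dia phi_intro) as [s0 [o0 [a0 [G1 [Hr0 [Hp0 H0]]]]]].
    destruct (dia_rule_comp Hr0 Hr) as [<- Hr'].
    apply (dia_rule_in (a := a0) Hr'); [exact (perm_cons_head_app _ Hp0)|].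
    apply (cut_incl (cut_smaller (fsize_signed_dia s a)) H0 H').
    + intros x Hx. apply in_mctx in Hx as [Hx|[<-|[]]]; [right|left; reflexivity].
      apply in_mctx; left; exact Hx.
    + apply mctx_mono; [|apply incl_refl]. apply incl_appl, (perm_cons_tail Hp0).
  - apply (dia_rule_in (a := a) Hr); [apply in_or_app; right; exact HDl | exact H'].
Qed.

Lemma cut_imp_l a b D G0 Dl c :
  Permutation D (Imp a b :: G0) -> incl D (phi :: Dl) ->
  prov L (G ++ Dl) a -> prov L (b :: G ++ Dl) c -> prov L (G ++ Dl) c.
Proof.
  intros Hp HD Ha Hb.
  destruct (HD _ (perm_cons_head Hp)) as [Ephi|HDl].
  - rewrite Ephi in cut_smaller, phi_intro.
    assert (Hb' : prov L (G ++ Dl) b).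
    { pose proof (right_intro_imp phi_intro) as Himp.
      apply (cut_incl (cut_smaller (psi := a) ltac:(cbn; lia)) Ha Himp); incl_tac. }
    apply (cut_incl (cut_smaller (psi := b) ltac:(cbn; lia)) Hb' Hb); incl_tac.
  - apply (imp_l_in (a := a) (b := b)); [|exact Ha | exact Hb].
    apply in_or_app; right; exact HDl.
Qed.

Lemma in_cut_context P D G0 Dl :
  Permutation D (P :: G0) -> incl D (phi :: Dl) -> ~ implicative_or_modal P ->
  In P (G ++ Dl).
Proof.
  intros Hp HD HP. destruct (HD _ (perm_cons_head Hp)) as [->|HDl].
  - destruct (HP (right_intro_shape phi_intro)).
  - apply in_or_app; right; exact HDl.
Qed.

Lemma cut_premise C P D G0 Dl c :
  Permutation D (P :: G0) -> incl D (phi :: Dl) ->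
  (forall Dl', incl (C ++ G0) (phi :: Dl') -> prov L (G ++ Dl') c) ->
  prov L (C ++ G ++ Dl) c.
Proof.
  intros Hp HD IH. pose proof (perm_cons_tail Hp).
  apply (prov_incl (IH (C ++ Dl) ltac:(incl_tac))). incl_tac.
Qed.

Lemma cut_right_intro D chi :
  prov L D chi -> forall Dl, incl D (phi :: Dl) -> prov L (G ++ Dl) chi.
Proof.
  induction 1 as [p G0 D Hp | p G0 D Hp | a G0 D c Hp H1 IH1 | G0 a H1 IH1
   | a b G0 D c Hp H1 IH1 | G0 a b H1 IH1 H2 IH2 | a b G0 D c Hp H1 IH1 H2 IH2
   | G0 a b H1 IH1 | G0 a b H1 IH1 | a b G0 D c Hp H1 IH1 | G0 a b H1 IH1 H2 IH2
   | a b G0 D c Hp H1 IH1 H2 IH2 | G0 a b H1 IH1 | G0 a b H1 IH1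
   | a b G0 D c Hp H1 IH1 H2 IH2 | G0 a b H1 IH1 | a b G0 D c Hp H1 IH1 | G0 a b H1 IH1 H2 IH2
   | G0 c Hh H1 IH1 | a G0 D c Hh Hp H1 IH1 | a G0 D c Hh Hp H1 IH1 | G0 c Hh H1 IH1
   | a G0 D c Hh Hp H1 IH1 | a G0 D c Hh Hp H1 IH1 | a G0 D c Hh Hp H1 IH1 | a G0 D c Hh Hp H1 IH1
   | G0 c Hh H1 IH1 | a G0 D c Hh Hp H1 IH1 | a G0 D c Hh Hp H1 IH1 | G0 c Hh H1 IH1
   | a G0 D c Hh Hp H1 IH1 | a G0 D c Hh Hp H1 IH1 | a G0 D c Hh Hp H1 IH1 | a G0 D c Hh Hp H1 IH1];
    intros Dl HD.
  - apply ax_p_in, (in_cut_context Hp HD); auto.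
  - apply ax_np_in, (in_cut_context Hp HD); auto.
  - apply (nn_l_in (a := a)); [apply (in_cut_context Hp HD); auto|].
    exact (cut_premise (C := [a]) Hp HD IH1).
  - apply nn_r; auto.
  - apply (and_l_in (a := a) (b := b)); [apply (in_cut_context Hp HD); auto|].
    exact (cut_premise (C := [a; b]) Hp HD IH1).
  - apply and_r; auto.
  - apply (or_l_in (a := a) (b := b)); [apply (in_cut_context Hp HD); auto|..].
    + exact (cut_premise (C := [a]) Hp HD IH1).
    + exact (cut_premise (C := [b]) Hp HD IH2).
  - apply or_r1; auto.
  - apply or_r2; auto.
  - apply (nor_l_in (a := a) (b := b)); [apply (in_cut_context Hp HD); auto|].
    exact (cut_premise (C := [Neg a; Neg b]) Hp HD IH1).
  - apply nor_r; auto.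
  - apply (nand_l_in (a := a) (b := b)); [apply (in_cut_context Hp HD); auto|..].
    + exact (cut_premise (C := [Neg a]) Hp HD IH1).
    + exact (cut_premise (C := [Neg b]) Hp HD IH2).
  - apply nand_r1; auto.
  - apply nand_r2; auto.
  - apply (cut_imp_l Hp HD).
    + apply IH1, (incl_tran (incl_cons (perm_cons_head Hp) (perm_cons_tail Hp)) HD).
    + exact (cut_premise (C := [b]) Hp HD IH2).
  - apply imp_r. rewrite <- app_assoc. apply IH1. incl_tac.
  - apply (nimp_l_in (a := a) (b := b)); [apply (in_cut_context Hp HD); auto|].
    exact (cut_premise (C := [a; Neg b]) Hp HD IH1).
  - apply nimp_r; auto.
  - apply (cut_box_rule (br_Box Hh) HD).
    cbn. rewrite app_nil_r. exact H1.
  - exact (cut_dia_rule (dr_Dia Hh) Hp HD H1).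
  - exact (cut_dia_rule (dr_Box_neg Hh) Hp HD H1).
  - apply (cut_box_rule (br_Dia_neg Hh) HD).
    cbn. rewrite app_nil_r. exact H1.
  - exact (cut_dia_rule (dr_Dia_pm Hh) Hp HD H1).
  - exact (cut_dia_rule (dr_Box_neg_pm Hh) Hp HD H1).
  - exact (cut_dia_rule (dr_Dia_vee Hh) Hp HD H1).
  - exact (cut_dia_rule (dr_Box_neg_vee Hh) Hp HD H1).
  - apply (cut_box_rule (br_Box_join Hh) HD).
    cbn. rewrite app_nil_r. exact H1.
  - exact (cut_dia_rule (dr_Dia_join Hh) Hp HD H1).
  - exact (cut_dia_rule (dr_Box_neg_join Hh) Hp HD H1).
  - apply (cut_box_rule (br_Dia_neg_join Hh) HD).
    cbn. rewrite app_nil_r. exact H1.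
  - exact (cut_dia_rule (dr_Dia1 Hh) Hp HD H1).
  - exact (cut_dia_rule (dr_Box_neg1 Hh) Hp HD H1).
  - exact (cut_dia_rule (dr_Dia1_join Hh) Hp HD H1).
  - exact (cut_dia_rule (dr_Box_neg1_join Hh) Hp HD H1).
Qed.

End CutReduction.

Lemma prov_perm_tail L C P G G0 Dl c :
  Permutation G (P :: G0) -> prov L (C ++ G0 ++ Dl) c -> prov L (C ++ G ++ Dl) c.
Proof. intros Hp H. pose proof (perm_cons_tail Hp). apply (prov_incl H). incl_tac. Qed.

Lemma cut_axiom L phi G D Dl chi :
  In phi G -> prov L D chi -> incl D (phi :: Dl) -> prov L (G ++ Dl) chi.
Proof. intros Hphi H HD. apply (prov_incl H). incl_tac. Qed.

Ltac smaller_premises :=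
  let psi := fresh "psi" in
  intros psi Hpsi; cbn in Hpsi;
  repeat (destruct Hpsi as [<-|Hpsi]; [split; [|assumption]; match goal with
    IHs : forall _, _ -> cut_admissible _ _ |- _ => apply IHs; cbn; lia end|]);
  destruct Hpsi.

Ltac invert_left C :=
  apply (cut_list (C := C)); [smaller_premises|];
  eapply prov_replace; [eassumption | eassumption | eauto 6 using covered, in_eq, in_cons].

Lemma cut_by_left_derivation L phi :
  (forall psi, fsize psi < fsize phi -> cut_admissible L psi) -> cut_admissible L phi.
Proof.
  intros IHs G D Dl chi HG. revert IHs D Dl chi.
  induction HG as [p G0 G Hp | p G0 G Hp | a G0 G c Hp H1 IH1 | G a H1 IH1
   | a b G0 G c Hp H1 IH1 | G a b H1 IH1 H2 IH2 | a b G0 G c Hp H1 IH1 H2 IH2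
   | G a b H1 IH1 | G a b H1 IH1 | a b G0 G c Hp H1 IH1 | G a b H1 IH1 H2 IH2
   | a b G0 G c Hp H1 IH1 H2 IH2 | G a b H1 IH1 | G a b H1 IH1
   | a b G0 G c Hp H1 IH1 H2 IH2 | G a b H1 IH1 | a b G0 G c Hp H1 IH1 | G a b H1 IH1 H2 IH2
   | G c Hh H1 IH1 | a G0 G c Hh Hp H1 IH1 | a G0 G c Hh Hp H1 IH1 | G c Hh H1 IH1
   | a G0 G c Hh Hp H1 IH1 | a G0 G c Hh Hp H1 IH1 | a G0 G c Hh Hp H1 IH1 | a G0 G c Hh Hp H1 IH1
   | G c Hh H1 IH1 | a G0 G c Hh Hp H1 IH1 | a G0 G c Hh Hp H1 IH1 | G c Hh H1 IH1
   | a G0 G c Hh Hp H1 IH1 | a G0 G c Hh Hp H1 IH1 | a G0 G c Hh Hp H1 IH1 | a G0 G c Hh Hp H1 IH1];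
    intros IHs D Dl chi HD HDl.
  - exact (cut_axiom (perm_cons_head Hp) HD HDl).
  - exact (cut_axiom (perm_cons_head Hp) HD HDl).
  - apply (nn_l_in (a := a)); [exact (perm_cons_head_app _ Hp)|].
    exact (prov_perm_tail (C := [a]) Hp (IH1 IHs _ _ _ HD HDl)).
  - invert_left [a].
  - apply (and_l_in (a := a) (b := b)); [exact (perm_cons_head_app _ Hp)|].
    exact (prov_perm_tail (C := [a; b]) Hp (IH1 IHs _ _ _ HD HDl)).
  - invert_left [a; b].
  - apply (or_l_in (a := a) (b := b)); [exact (perm_cons_head_app _ Hp)|..].
    + exact (prov_perm_tail (C := [a]) Hp (IH1 IHs _ _ _ HD HDl)).
    + exact (prov_perm_tail (C := [b]) Hp (IH2 IHs _ _ _ HD HDl)).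
  - invert_left [a].
  - invert_left [b].
  - apply (nor_l_in (a := a) (b := b)); [exact (perm_cons_head_app _ Hp)|].
    exact (prov_perm_tail (C := [Neg a; Neg b]) Hp (IH1 IHs _ _ _ HD HDl)).
  - invert_left [Neg a; Neg b].
  - apply (nand_l_in (a := a) (b := b)); [exact (perm_cons_head_app _ Hp)|..].
    + exact (prov_perm_tail (C := [Neg a]) Hp (IH1 IHs _ _ _ HD HDl)).
    + exact (prov_perm_tail (C := [Neg b]) Hp (IH2 IHs _ _ _ HD HDl)).
  - invert_left [Neg a].
  - invert_left [Neg b].
  - apply (imp_l_in (a := a) (b := b)); [exact (perm_cons_head_app _ Hp)|..].
    + apply (prov_incl H1), incl_appl, incl_cons;
        [exact (perm_cons_head Hp) | exact (perm_cons_tail Hp)].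
    + exact (prov_perm_tail (C := [b]) Hp (IH2 IHs _ _ _ HD HDl)).
  - exact (cut_right_intro IHs (ri_imp H1) HD HDl).
  - apply (nimp_l_in (a := a) (b := b)); [exact (perm_cons_head_app _ Hp)|].
    exact (prov_perm_tail (C := [a; Neg b]) Hp (IH1 IHs _ _ _ HD HDl)).
  - invert_left [a; Neg b].
  - refine (cut_right_intro IHs (ri_box (br_Box Hh) _) HD HDl).
    cbn. rewrite app_nil_r. exact H1.
  - exact (cut_right_intro IHs (ri_dia (dr_Dia Hh) Hp H1) HD HDl).
  - exact (cut_right_intro IHs (ri_dia (dr_Box_neg Hh) Hp H1) HD HDl).
  - refine (cut_right_intro IHs (ri_box (br_Dia_neg Hh) _) HD HDl).
    cbn. rewrite app_nil_r. exact H1.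
  - exact (cut_right_intro IHs (ri_dia (dr_Dia_pm Hh) Hp H1) HD HDl).
  - exact (cut_right_intro IHs (ri_dia (dr_Box_neg_pm Hh) Hp H1) HD HDl).
  - exact (cut_right_intro IHs (ri_dia (dr_Dia_vee Hh) Hp H1) HD HDl).
  - exact (cut_right_intro IHs (ri_dia (dr_Box_neg_vee Hh) Hp H1) HD HDl).
  - refine (cut_right_intro IHs (ri_box (br_Box_join Hh) _) HD HDl).
    cbn. rewrite app_nil_r. exact H1.
  - exact (cut_right_intro IHs (ri_dia (dr_Dia_join Hh) Hp H1) HD HDl).
  - exact (cut_right_intro IHs (ri_dia (dr_Box_neg_join Hh) Hp H1) HD HDl).
  - refine (cut_right_intro IHs (ri_box (br_Dia_neg_join Hh) _) HD HDl).
    cbn. rewrite app_nil_r. exact H1.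
  - exact (cut_right_intro IHs (ri_dia (dr_Dia1 Hh) Hp H1) HD HDl).
  - exact (cut_right_intro IHs (ri_dia (dr_Box_neg1 Hh) Hp H1) HD HDl).
  - exact (cut_right_intro IHs (ri_dia (dr_Dia1_join Hh) Hp H1) HD HDl).
  - exact (cut_right_intro IHs (ri_dia (dr_Box_neg1_join Hh) Hp H1) HD HDl).
Qed.

Lemma cut_admissible_all L phi : cut_admissible L phi.
Proof.
  induction phi as [phi IH] using (induction_ltof1 _ fsize).
  apply cut_by_left_derivation. exact IH.
Qed.

Theorem theorem5 :
  forall (L : calculus) (Gamma Delta : list form) (phi chi : form),
    (L = GN4 -> Forall modal_free Gamma /\ Forall modal_free Delta /\
                modal_free phi /\ modal_free chi) ->
    prov L Gamma phi ->
    prov L (phi :: Delta) chi ->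
    prov L (Gamma ++ Delta) chi.
Proof.
  intros L Gamma Delta phi chi _ H1 H2.
  exact (@cut_admissible_all L phi _ _ _ _ H1 H2 (incl_refl _)).
Qed.
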